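(* Assume conditions (C1) and (C2) stated in the context. Then there exists a constant $\varepsilon^{\mathcal P}_{\mathrm{iso}}>0$ such that for every $p,q\in\mathcal P$, \[ \mathcal G_p(R_q)\in\{0\}\cup[\varepsilon^{\mathcal P}_{\mathrm{iso}},\infty). \]
   Context: $\mathcal X$ is a measurable space with probability distribution $d_0$; $\mathcal A$ is a separable metric space; $\pi_0$ is a Markov kernel $\mathcal X\to\Delta(\mathcal A)$ with topological supports $S_x:=\mathrm{supp}(\pi_0(\cdot\mid x))$; $\|f\|_{\infty,\mathrm{supp}(\pi_0)}:=\sup\{|f(x,a)|:x\in\mathcal X,a\in S_x\}$. A fixed measurable tie-breaking rule assigns to each measurable reward $R:\mathcal X\times\mathcal A\to\mathbb R$ a measurable map $a_R$ with $a_R(x)\in\arg\max_{a\in S_x}R(x,a)$. $\mathcal P$ is a set; each $p\in\mathcal P$ induces a $\pi_0$-centered (i.e. $\int R_p(x,a)\pi_0(da\mid x)=0$ for all $x$) measurable reward $R_p$; $\mathcal F_{\mathcal P}:=\{R_p:p\in\mathcal P\}$, $a_p:=a_{R_p}$. (C1) $\mathcal F_{\mathcal P}$ is compact under $\|\cdot\|_{\infty,\mathrm{supp}(\pi_0)}$, and for every $R\in\mathcal F_{\mathcal P}$, $a\mapsto R(x,a)$ is continuous on $S_x$ for $d_0$-a.e. $x$. (C2) There is $\Delta^{\mathcal P}_{\min}>0$ such that for every $p\in\mathcal P$, $d_0$-a.s. in $X$, $a_p(X)$ is the unique maximizer and $R_p(X,a_p(X))-\sup_{a\in S_X,a\neq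 a_p(X)}R_p(X,a)\ge\Delta^{\mathcal P}_{\min}$. Temperature-zero regret: $\mathcal G_p(R):=\mathbb E_{X\sim d_0}[R_p(X,a_p(X))-R_p(X,a_R(X))]$. *)

From HB Require Import structures.
From mathcomp Require Import all_boot all_order all_algebra.
From mathcomp Require Import all_classical all_reals all_analysis.
Set Implicit Arguments. Unset Strict Implicit. Unset Printing Implicit Defensive.
Import Order.TTheory GRing.Theory Num.Theory.
Import numFieldNormedType.Exports.
Local Open Scope classical_set_scope.
Local Open Scope ring_scope.

Notation Borel T := (g_sigma_algebraType (@open T)).

Definition kernel_supp {d} (R : realType) (X : measurableType d)
  (A : ptopologicalType) (k : R.-pker X ~> Borel A) (x : X) : set A :=
  [set a | forall U : set A, open U -> U a -> (0 < k x (U : set (Borel A)))%E].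

Definition supnorm {R : realType} {X A : Type} (S : X -> set A)
  (f : X -> A -> R) : \bar R :=
  ereal_sup [set y | exists x a, S x a /\ y = (`|f x a|)%:E].

Definition sup_open {R : realType} {X A : Type} (S : X -> set A)
  (U : set (X -> A -> R)) : Prop :=
  forall f, U f -> exists e : R, 0 < e /\
    forall g : X -> A -> R, (supnorm S (fun x a => (g x a - f x a)%R) < e%:E)%E -> U g.

Definition sup_compact {R : realType} {X A : Type} (S : X -> set A)
  (F : set (X -> A -> R)) : Prop :=
  forall (I : Type) (U : I -> set (X -> A -> R)),
    (forall i, sup_open S (U i)) -> F `<=` \bigcup_i U i ->
    exists D : set I, finite_set D /\ F `<=` \bigcup_(i in D) U i.

Definition is_argmax {X A : Type} {R : realType} (S : X -> set A)
  (Rw : X -> A -> R) (x : X) (a : A) : Prop :=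
  S x a /\ forall b, S x b -> Rw x b <= Rw x a.

(* temperature-zero regret G_p(R_q) = E_{X ~ d0}[R_p(X,a_p(X)) - R_p(X,a_{R_q}(X))] *)
Definition regret {d} {R : realType} {X : measurableType d} {A : Type}
  (d0 : probability X R) (tb : (X -> A -> R) -> X -> A)
  (Rp Rq : X -> A -> R) : \bar R :=
  (\int[d0]_x ((Rp x (tb Rp x) - Rp x (tb Rq x))%:E))%E.

From HB Require Import structures.
From mathcomp Require Import all_boot all_order all_algebra.
From mathcomp Require Import all_classical all_reals all_analysis.
From mathcomp Require Import measurable_realfun lra.
Import Order.TTheory GRing.Theory Num.Theory.
Import numFieldNormedType.Exports.
Local Open Scope classical_set_scope.
Local Open Scope ring_scope.

(* By (C2), for a.e. x the chosen action a_p(x) beats every other supported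
   action by at least Delta for R_p, so the integrand of G_p(R_q) vanishes
   where a_p(x) = a_q(x) and is at least Delta elsewhere; hence G_p(R_q) is
   0 or at least Delta * d0(a_p <> a_q).  Two rewards at sup-distance less
   than Delta/2 have the same maximiser wherever both have the margin.  By
   compactness finitely many such balls, centred at R_j for j in a finite D,
   cover F_P, so up to null sets the disagreement sets {a_p <> a_q} range
   over the finitely many {a_j <> a_i}, j, i in D, and eps is Delta times the
   least positive measure among them. *)

Lemma finite_set_pos_lbound {R : realDomainType} {V : set R} : finite_set V ->
  exists2 eps : R, 0 < eps & forall v, V v -> 0 < v -> eps <= v.
Proof.
move=> /finite_seqP[s ->]; elim: s => [|a s [e e_gt0 He]].
  by exists 1 => // v.
exists (if 0 < a then Num.min e a else e).
  by case: ifP => // a_gt0; rewrite lt_min e_gt0 a_gt0.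
move=> v /=; rewrite inE => /orP[/eqP->|vs] v_gt0.
  by rewrite v_gt0 ge_min lexx orbT.
by case: ifP => _; rewrite ?ge_min He.
Qed.

Section Supnorm.
Context {R : realType} {X A : Type} (S : X -> set A).

Definition sup_near (f g : X -> A -> R) (e : R) : Prop :=
  forall x a, S x a -> `|f x a - g x a| < e.

Definition sup_ball (f : X -> A -> R) (e : R) : set (X -> A -> R) :=
  [set g | (supnorm S (fun x a => (g x a - f x a)%R) < e%:E)%E].

Lemma supnorm_ge (h : X -> A -> R) {x a} :
  S x a -> ((`|h x a|)%:E <= supnorm S h)%E.
Proof. by move=> Sxa; apply: ereal_sup_ubound; exists x, a. Qed.

Lemma supnorm_le (h : X -> A -> R) (r : R) :
  (forall x a, S x a -> `|h x a| <= r) -> (supnorm S h <= r%:E)%E.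
Proof.
by move=> hr; apply: ge_ereal_sup => _ [x [a [Sxa ->]]]; rewrite lee_fin hr.
Qed.

Lemma sup_ball_near f g e : sup_ball f e g -> sup_near g f e.
Proof.
by move=> fg x a Sxa; rewrite -lte_fin; exact: le_lt_trans (supnorm_ge _ Sxa) fg.
Qed.

Lemma sup_ball_center f e : 0 < e -> sup_ball f e f.
Proof.
move=> e_gt0; apply: (@le_lt_trans _ _ 0%E); last by rewrite lte_fin.
by apply: supnorm_le => x a _; rewrite subrr normr0.
Qed.

Lemma sup_open_ball f e : 0 < e -> sup_open S (sup_ball f e).
Proof.
move=> e_gt0 g fg.
have [r gr r_lt_e] : exists2 r : R,
    (supnorm S (fun x a => (g x a - f x a)%R) <= r%:E)%E & r < e.
  move: fg; rewrite /sup_ball /=; case: supnorm => [r| |] // gr.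
  - by exists r; rewrite // -lte_fin.
  - by exists 0; rewrite ?leNye.
exists ((e - r) / 2); split; first by rewrite divr_gt0 // subr_gt0.
move=> h /sup_ball_near hg; rewrite /sup_ball /=.
apply: (@le_lt_trans _ _ ((e + r) / 2)%:E); last by rewrite lte_fin; lra.
apply: supnorm_le => x a Sxa.
have gfr : `|g x a - f x a| <= r.
  by rewrite -lee_fin; exact: le_trans (supnorm_ge _ Sxa) gr.
have := ler_normD (h x a - g x a) (g x a - f x a); rewrite addrA subrK.
by have := hg x a Sxa; lra.
Qed.

Lemma sup_compact_net {P : Type} {F : P -> X -> A -> R} {e : R} :
  sup_compact S (range F) -> 0 < e ->
  exists2 D : set P, finite_set D &
    forall p, exists2 j, D j & sup_near (F p) (F j) e.
Proof.
move=> cF e_gt0.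
have cover : range F `<=` \bigcup_j sup_ball (F j) e.
  by move=> _ [j _ <-]; exists j => //; exact: sup_ball_center.
have [D [finD DF]] := cF P _ (fun j => sup_open_ball (F j) _ e_gt0) cover.
exists D => // p; have [j Dj /sup_ball_near pj] := DF _ (imageT F p).
by exists j.
Qed.

End Supnorm.

Section GapArgmax.
Context {A : Type} {R : realFieldType}.

Definition gap_argmax (S : set A) (r : A -> R) (delta : R) (a : A) : Prop :=
  S a /\ forall b, S b -> b <> a -> delta <= r a - r b.

Lemma gap_argmax_le {S r delta a b} :
  0 <= delta -> gap_argmax S r delta a -> S b -> r b <= r a.
Proof.
move=> delta_ge0 [_ gap] Sb; have [->//|ba] := pselect (b = a).
by rewrite -subr_ge0 (le_trans delta_ge0) ?gap.
Qed.

Lemma gap_argmax_subr_eq0 {S r delta a b} :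
  0 < delta -> gap_argmax S r delta a -> S b -> r a - r b = 0 <-> a = b.
Proof.
move=> delta_gt0 [_ gap] Sb; split => [rab|<-]; last exact: subrr.
by apply: contrapT => /nesym/(gap b Sb); rewrite rab; lra.
Qed.

(* Under [r], the maximiser [b] of [s] loses less than [delta] against [a]. *)
Lemma gap_argmax_near_eq {S r s delta a b} : gap_argmax S r delta a -> S b ->
  (forall c, S c -> s c <= s b) -> (forall c, S c -> `|r c - s c| < delta / 2) ->
  a = b.
Proof.
move=> [Sa gap] Sb smax near; apply: contrapT => /nesym/(gap b Sb) rab.
have := smax a Sa; have := near a Sa; have := near b Sb.
by rewrite !ltr_norml => /andP[? ?] /andP[? ?]; lra.
Qed.

End GapArgmax.

Lemma gap_argmax_of_ereal_sup {A : Type} {R : realType} (S : set A)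
    (r : A -> R) delta a : S a ->
  (delta%:E <= (r a)%:E - ereal_sup [set (r b)%:E | b in S `\ a])%E ->
  gap_argmax S r delta a.
Proof.
move=> Sa gap; split => // b Sb ba; rewrite -lee_fin EFinB; apply: le_trans gap _.
by apply: leeB => //; apply: ereal_sup_ubound; exists b.
Qed.

Section GapIntegral.
Context {d} {T : measurableType d} {R : realType} (mu : {measure set T -> \bar R}).
Context {g : T -> R} {G : set T}.
Hypotheses (mg : measurable_fun setT g) (mG : measurable G).

Lemma integral_eq0_off_null : mu G = 0 -> {ae mu, forall x, ~ G x -> g x = 0} ->
  (\int[mu]_x (g x)%:E = 0)%E.
Proof.
move=> G0 gG; rewrite (ae_eq_integral (cst 0%E)) ?integral0 //.
- exact/measurable_EFinP.
have nG : {ae mu, forall x, ~ G x} by exists G; split => // x /= /contrapT.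
by apply: filterS (filterI gG nG) => x [gx /gx ->].
Qed.

Lemma integral_ge_on_set {delta : R} : 0 <= delta ->
  {ae mu, forall x, 0 <= g x /\ (G x -> delta <= g x)} ->
  (delta%:E * mu G <= \int[mu]_x (g x)%:E)%E.
Proof.
move=> delta_ge0 hg.
(* [ae_ge0_le_integral] wants an everywhere nonnegative integrand. *)
have mg0 : measurable_fun setT (fun x => Num.max (g x) 0).
  exact: measurable_maxr.
rewrite (ae_eq_integral (fun x => (Num.max (g x) 0)%:E)) //; first last.
- by apply: filterS hg => x [g_ge0 _] _; rewrite max_l.
- exact/measurable_EFinP.
- exact/measurable_EFinP.
rewrite -(setIT G) -integral_indic // -integralZl_indic //; last first.
  by rewrite ltNge delta_ge0.
apply: ae_ge0_le_integral => //.
- by move=> x _; rewrite lee_fin mulr_ge0.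
- by apply/measurable_EFinP; apply: measurable_funM.
- by move=> x _; rewrite lee_fin le_max lexx orbT.
- exact/measurable_EFinP.
apply: filterS hg => x [g_ge0 Gg] _; rewrite lee_fin /indic.
have [Gx|nGx] := pselect (G x).
  by rewrite mem_set // mulr1 le_max Gg.
by rewrite memNset // mulr0 le_max lexx orbT.
Qed.

End GapIntegral.

Definition regret_integrand {X A : Type} {R : realType}
  (tb : (X -> A -> R) -> X -> A) (Rp Rq : X -> A -> R) (x : X) : R :=
  Rp x (tb Rp x) - Rp x (tb Rq x).

Lemma measurable_regret_integrand {d d'} {X : measurableType d}
  {Y : measurableType d'} {R : realType} (tb : (X -> Y -> R) -> X -> Y)
  (Rp Rq : X -> Y -> R) :
  measurable_fun setT (fun z : X * Y => Rp z.1 z.2) ->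
  measurable_fun setT (tb Rp) -> measurable_fun setT (tb Rq) ->
  measurable_fun setT (regret_integrand tb Rp Rq).
Proof.
move=> mR mp mq.
have mRtb Rr : measurable_fun setT (tb Rr) ->
    measurable_fun setT (fun x => Rp x (tb Rr x)).
  move=> mr; have mpair : measurable_fun setT (fun x => (x, tb Rr x)).
    exact: measurable_fun_pair.
  exact: measurableT_comp mR mpair.
exact: measurable_funB (mRtb _ mp) (mRtb _ mq).
Qed.

Section RegretIsolated.
Context {d} {X : measurableType d} {A : Type} {R : realType}.
Context {d0 : probability X R} {S : X -> set A} {tb : (X -> A -> R) -> X -> A}.
Context {P : Type} {Rw : P -> X -> A -> R} {delta : R}.
Hypothesis delta_gt0 : 0 < delta.
Hypothesis gap : forall p,
  {ae d0, forall x, gap_argmax (S x) (Rw p x) delta (tb (Rw p) x)}.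

Let f p q := regret_integrand tb (Rw p) (Rw q).

Lemma ae_regret_integrand_gap p q :
  {ae d0, forall x, 0 <= f p q x /\ (f p q x <> 0 -> delta <= f p q x)}.
Proof.
apply: filterS (filterI (gap p) (gap q)) => x [gp [Sq _]]; split.
  by rewrite subr_ge0 (gap_argmax_le (ltW delta_gt0) gp Sq).
move=> fpq0; case: gp => _; apply => //.
by move=> epq; apply: fpq0; rewrite /f /regret_integrand epq subrr.
Qed.

Lemma ae_regret_integrand_eq0_near {p q j i} :
  sup_near S (Rw p) (Rw j) (delta / 2) -> sup_near S (Rw q) (Rw i) (delta / 2) ->
  {ae d0, forall x, f p q x = 0 <-> f j i x = 0}.
Proof.
move=> pj qi.
apply: filterS (filterI (filterI (gap p) (gap q)) (filterI (gap j) (gap i))).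
move=> x [[gp gq] [gj gi]].
have tb_near r s : sup_near S (Rw r) (Rw s) (delta / 2) ->
    gap_argmax (S x) (Rw r x) delta (tb (Rw r) x) ->
    gap_argmax (S x) (Rw s x) delta (tb (Rw s) x) -> tb (Rw r) x = tb (Rw s) x.
  move=> rs gr gs; apply: gap_argmax_near_eq gr gs.1 _ (rs x) => c Sc.
  exact: gap_argmax_le (ltW delta_gt0) gs Sc.
apply: iff_trans (gap_argmax_subr_eq0 delta_gt0 gp gq.1) _.
rewrite (tb_near p j) // (tb_near q i) //.
exact: iff_sym (gap_argmax_subr_eq0 delta_gt0 gj gi.1).
Qed.

Lemma regret_isolated_of_net :
  (forall p q, measurable_fun setT (f p q)) ->
  (exists2 D : set P, finite_set D &
     forall p, exists2 j, D j & sup_near S (Rw p) (Rw j) (delta / 2)) ->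
  exists2 eps : R, 0 < eps & forall p q,
    regret d0 tb (Rw p) (Rw q) = 0%E \/ (eps%:E <= regret d0 tb (Rw p) (Rw q))%E.
Proof.
move=> mf [D finD net].
pose G j i := f j i @^-1` (~` [set 0]).
have mG j i : measurable (G j i).
  by rewrite -[G j i]setTI; apply: mf => //; apply: measurableC.
have [eps eps_gt0 eps_le] := finite_set_pos_lbound
  (finite_image (fun ji => fine (d0 (G ji.1 ji.2))) (finite_setX finD finD)).
exists (delta * eps) => [|p q]; first exact: mulr_gt0.
have [j Dj pj] := net p; have [i Di qi] := net q.
have fG := ae_regret_integrand_eq0_near pj qi.
have [G0|G_neq0] := eqVneq (d0 (G j i)) 0%E.
  left; apply: (integral_eq0_off_null d0 (mf p q) (mG j i) G0).
  by apply: filterS fG => x fpq nG; apply/fpq; apply: contrapT.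
have f_gap : {ae d0, forall x, 0 <= f p q x /\ (G j i x -> delta <= f p q x)}.
  apply: filterS (filterI fG (ae_regret_integrand_gap p q)).
  by move=> x [fpq [f_ge0 fpq_gap]]; split => // Gx; apply: fpq_gap => /fpq.
have eps_le_G : ((delta * eps)%:E <= delta%:E * d0 (G j i))%E.
  have Gfin : d0 (G j i) = (fine (d0 (G j i)))%:E by rewrite fineK ?fin_num_measure.
  rewrite Gfin -EFinM lee_fin ler_pM2l // eps_le //; first by exists (j, i).
  by rewrite -lte_fin -Gfin lt0e G_neq0 measure_ge0.
right; apply: le_trans eps_le_G
  (integral_ge_on_set d0 (mf p q) (mG j i) (ltW delta_gt0) f_gap).
Qed.

End RegretIsolated.

Theorem lemma1 (R : realType) (d : measure_display) (X : measurableType d)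
  (d0 : probability X R)
  (A : pseudoPMetricType R)
  (hA_metric : hausdorff_space A)
  (hA_sep : exists D : set A, countable D /\ dense D)
  (pi0 : R.-pker X ~> Borel A)
  (tb : (X -> A -> R) -> X -> A)
  (P : Type) (Rw : P -> X -> A -> R)
  (Rw_meas : forall p, measurable_fun setT (fun z : (X * Borel A)%type => Rw p z.1 z.2))
  (Rw_centered : forall p x, (\int[pi0 x]_a (Rw p x a)%:E = 0)%E)
  (tb_meas : forall p, measurable_fun setT (tb (Rw p) : X -> Borel A))
  (tb_argmax : forall p x,
     (exists a, is_argmax (kernel_supp pi0) (Rw p) x a) ->
     is_argmax (kernel_supp pi0) (Rw p) x (tb (Rw p) x))
  (C1_compact : sup_compact (kernel_supp pi0) (range Rw))
  (C1_cont : forall p, {ae d0, forall x,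
     {within kernel_supp pi0 x, continuous (Rw p x)}})
  (C2 : exists Delta : R, 0 < Delta /\ forall p, {ae d0, forall x,
     kernel_supp pi0 x (tb (Rw p) x) /\
     (forall a, kernel_supp pi0 x a -> a <> tb (Rw p) x ->
        Rw p x a < Rw p x (tb (Rw p) x)) /\
     (Delta%:E <= (Rw p x (tb (Rw p) x))%:E -
        ereal_sup [set (Rw p x a)%:E | a in kernel_supp pi0 x `\ tb (Rw p) x])%E}) :
  exists eps : R, 0 < eps /\ forall p q,
    regret d0 tb (Rw p) (Rw q) = 0%E \/ (eps%:E <= regret d0 tb (Rw p) (Rw q))%E.
Proof.
have [Delta [Delta_gt0 C2_margin]] := C2.
have gap p : {ae d0, forall x,
    gap_argmax (kernel_supp pi0 x) (Rw p x) Delta (tb (Rw p) x)}.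
  apply: filterS (C2_margin p) => x [Sx [_ margin]].
  exact: gap_argmax_of_ereal_sup.
have mf p q : measurable_fun setT (regret_integrand tb (Rw p) (Rw q)).
  exact: (@measurable_regret_integrand _ _ _ (Borel A)).
have net := sup_compact_net _ C1_compact (divr_gt0 Delta_gt0 (ltr0Sn R 1)).
have [eps eps_gt0 iso] := regret_isolated_of_net Delta_gt0 gap mf net.
by exists eps.
Qed.
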